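(* Every finite ordinal potential game has at least one strongly maximal equilibrium.
   Context: A finite strategic-form game $\Gamma=(I,(S_i)_{i\in I},(u_i)_{i\in I})$ has finite player set $I$, finite nonempty strategy sets $S_i$, utilities $u_i:S\to\mathbb{R}$, $S=\prod_i S_i$; $(s_i',s_{-i})$ denotes $s$ with player $i$'s strategy replaced by $s_i'$. A pure Nash equilibrium is $s\in S$ with $u_i(s)\ge u_i(s_i',s_{-i})$ for all $i$ and $s_i'\in S_i$. A function $P:S\to\mathbb{R}$ is an ordinal potential if for all $i$, $a,b\in S_i$, $\sigma_{-i}\in S_{-i}$: $u_i(a,\sigma_{-i})>u_i(b,\sigma_{-i})\iff P(a,\sigma_{-i})>P(b,\sigma_{-i})$; $\Gamma$ is an ordinal potential game if one exists. The ordinal deployment graph of $\Gamma$ has vertex set $S$ and an arc $(s,s')$, $s'\neq s$, iff $s'=(s_i',s_{-i})$ for some $i$ with $u_i(s')\ge u_i(s)$. Define $s\succeq s'$ iff there is a directed path (possibly of length $0$) in this graph from $s'$ to $s$, and $s\succ s'$ iff $s\succeq s'$ and not $s'\succeq s$. A strongly maximal state is an $s^*$ with no $s$ satisfying $s\succ s^*$. Two states communicate if each is reachable from the other by a directed path. A strongly maximal equilibrium is a strongly maximal state $s$ such that every state communicating with $s$ (including $s$) is a pure Nash equilibrium. *)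

From mathcomp Require Import all_boot.
From Stdlib Require Import Reals Relations.
Set Implicit Arguments.
Unset Strict Implicit.
Unset Printing Implicit Defensive.

Open Scope R_scope.

Section Game.
Variables (I : finType) (S : I -> finType).

Definition profile := {dffun forall i : I, S i}.

Definition unilateral (i : I) (s t : profile) : Prop :=
  forall j : I, j <> i -> t j = s j.

Variable u : I -> profile -> R.

Definition is_nash (s : profile) : Prop :=
  forall (i : I) (t : profile), unilateral i s t -> u i t <= u i s.

Definition ordinal_potential (P : profile -> R) : Prop :=
  forall (i : I) (a b : profile), unilateral i b a ->
    (u i a > u i b <-> P a > P b).

Definition is_ordinal_potential_game : Prop :=
  exists P : profile -> R, ordinal_potential P.

Definition dep_arc (s s' : profile) : Prop :=
  s' <> s /\ exists i : I, unilateral i s s' /\ u i s' >= u i s.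

Definition reach : relation profile := clos_refl_trans profile dep_arc.

Definition succeq (s s' : profile) : Prop := reach s' s.
Definition succ (s s' : profile) : Prop := succeq s s' /\ ~ succeq s' s.

Definition strongly_maximal (s : profile) : Prop :=
  ~ exists t : profile, succ t s.

Definition communicate (s t : profile) : Prop := reach s t /\ reach t s.

Definition strongly_maximal_equilibrium (s : profile) : Prop :=
  strongly_maximal s /\ forall t : profile, communicate s t -> is_nash t.

End Game.

(* Every profile reachable from a profile s of minimal reachable set reaches s
   back, since otherwise its own reachable set would be strictly smaller; so s
   is strongly maximal and its communicating class is everything reachable from
   it.  The potential never decreases along arcs of the deployment graph and
   strictly increases along strictly profitable deviations; a profitable
   deviation inside the class would thus lead to a profile that cannot return
   to its class, hence every profile of the class is a Nash equilibrium. *)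
From mathcomp Require Import all_boot boolp.
From Stdlib Require Import Reals Relations Lra.

Set Implicit Arguments.
Unset Strict Implicit.
Unset Printing Implicit Defensive.

Section ClosedClass.
Variables (T : finType) (e : relation T).

Local Notation reach := (clos_refl_trans T e).

Definition reachable_set (s : T) : {set T} := [set t | `[< reach s t >]].

Lemma reachable_set_proper (s t : T) :
  reach s t -> ~ reach t s -> reachable_set t \proper reachable_set s.
Proof.
move=> st not_ts; apply/properP; split.
  apply/subsetP => x; rewrite !inE => /asboolP tx.
  by apply/asboolP; apply: rt_trans tx.
by exists s; rewrite !inE; apply/asboolP => //; apply: rt_refl.
Qed.

Lemma exists_reach_closed (x : T) :
  exists2 s, reach x s & forall t, reach s t -> reach t s.
Proof.
have [s xs s_min] := arg_minnP (fun s => #|reachable_set s|)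
  (P := fun s => `[< reach x s >]) (asboolT (rt_refl T e x)).
exists s; first exact/asboolP.
move=> t st; have [//|not_ts] := pselect (reach t s); exfalso.
have := proper_card (reachable_set_proper st not_ts).
rewrite ltnNge s_min //; apply/asboolP.
by apply: rt_trans st; apply/asboolP.
Qed.

End ClosedClass.

Section Deployment.
Variables (I : finType) (S : I -> finType) (u : I -> profile S -> R).

Lemma unilateral_sym i (s t : profile S) :
  unilateral i s t -> unilateral i t s.
Proof. by move=> st j ji; rewrite st. Qed.

Lemma strongly_maximal_of_reach_closed (s : profile S) :
  (forall t, reach u s t -> reach u t s) -> strongly_maximal u s.
Proof. by move=> s_closed [t [st not_ts]]; apply/not_ts/s_closed. Qed.

Variable P : profile S -> R.
Hypothesis P_potential : ordinal_potential u P.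

Lemma potential_reach_le (s t : profile S) : reach u s t -> P s <= P t.
Proof.
elim=> [x y [_ [i [xy u_le]]] | x | x y z _ Pxy _ Pyz]; [| lra | lra].
apply: Rnot_lt_le => Pyx.
have := proj2 (P_potential (unilateral_sym xy)) Pyx; lra.
Qed.

Lemma nash_of_reach_closed (s : profile S) :
  (forall t, reach u s t -> reach u t s) ->
  forall t, reach u s t -> is_nash u t.
Proof.
move=> s_closed t st i t' tt'; apply: Rnot_lt_le => profitable.
have t'_neq_t : t' <> t by move=> E; rewrite E in profitable; lra.
have st' : reach u s t'.
  by apply: rt_trans st (rt_step _ _ _ _ _); split=> //; exists i; split=> //; lra.
have back : reach u t' t by apply: rt_trans (s_closed _ st') st.
have := potential_reach_le back.
have := proj1 (P_potential tt') profitable; lra.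
Qed.

End Deployment.

Theorem corollary1 (I : finType) (S : I -> finType)
  (S_nonempty : forall i : I, inhabited (S i))
  (u : I -> profile S -> R) :
  is_ordinal_potential_game u ->
  exists s : profile S, strongly_maximal_equilibrium u s.
Proof.
move=> [P P_potential].
have [pick _] := @fin_all_exists I S (fun _ _ => True)
  (fun i => let: inhabits x := S_nonempty i in ex_intro _ x Logic.I).
have [s _ s_closed] := exists_reach_closed (dep_arc u) [ffun i => pick i].
exists s; split; first exact: strongly_maximal_of_reach_closed.
move=> t [st _]; exact: (nash_of_reach_closed P_potential (s := s) s_closed st).
Qed.
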